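(* Let $\varphi:\mathcal X\to\mathbb C^N$ be a feature map, $H$ a Hermitian $N\times N$ matrix, and $g(x)=\varphi(x)^*H\varphi(x)$. Then for every $Q\in\mathcal P(\mathcal X)$, \[L^{\mathrm{OPT}}_g(Q)=\sup_{\tilde Q\in\mathcal P(\mathcal X):\ \Sigma_{\tilde Q}=\Sigma_Q}L_g(\tilde Q).\]
   Context: $\mathcal X=[0,1]^d$; $\mathcal P(\mathcal X)$ is the set of probability measures on $\mathcal X$; $\varphi$ is assumed such that the integrals below exist (e.g. bounded measurable). For $Q\in\mathcal P(\mathcal X)$, $L_g(Q)=\log\int_{\mathcal X}e^{g(x)}\,dQ(x)$ and $\Sigma_Q=\int_{\mathcal X}\varphi(x)\varphi(x)^*\,dQ(x)$. With $D_{\mathrm{KL}}(P\|Q)=\int\log(dP/dQ)\,dP$, define $D^{\mathrm{OPT}}_{\mathrm{KL}}(\Sigma_P\|\Sigma_Q)=\inf\{D_{\mathrm{KL}}(\tilde P\|\tilde Q):\tilde P,\tilde Q\in\mathcal P(\mathcal X),\ \Sigma_{\tilde P}=\Sigma_P,\ \Sigma_{\tilde Q}=\Sigma_Q\}$ and $L^{\mathrm{OPT}}_g(Q)=\sup_{P\in\mathcal P(\mathcal X)}\big(\int_{\mathcal X}g\,dP-D^{\mathrm{OPT}}_{\mathrm{KL}}(\Sigma_P\|\Sigma_Q)\big)$. *)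

From HB Require Import structures.
From mathcomp Require Import all_boot all_order all_algebra.
From mathcomp Require Import all_classical all_reals all_analysis.
From mathcomp Require Import complex sesquilinear.
Unset Printing Implicit Defensive.
Import Order.TTheory GRing.Theory Num.Theory.
Local Open Scope classical_set_scope.
Local Open Scope ring_scope.
Local Open Scope charge_scope.

(* The ambient space is R^d = d.-tuple R with its product Borel sigma-algebra;
   X = [0,1]^d is the unitcube below, and P(X) is modelled as the probability
   measures on R^d giving full mass to the unitcube. *)
Definition unitcube {R : realType} (d : nat) : set (d.-tuple R) :=
  [set x | forall i : 'I_d, 0 <= tnth x i <= 1].

Definition probX {R : realType} (d : nat) : set (probability (d.-tuple R) R) :=
  [set P : probability (d.-tuple R) R | P (unitcube d) = 1%E].

Definition feature_ok {R : realType} {d N : nat}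
    (phi : d.-tuple R -> 'cV[R[i]]_N) : Prop :=
  (forall k : 'I_N, measurable_fun (unitcube d) (fun x => complex.Re (phi x k 0))) /\
  (forall k : 'I_N, measurable_fun (unitcube d) (fun x => complex.Im (phi x k 0))) /\
  (exists M : R, forall x, unitcube d x -> forall k : 'I_N,
      `|complex.Re (phi x k 0)| <= M /\ `|complex.Im (phi x k 0)| <= M).

Definition cintegral {R : realType} {d : nat} (P : probability (d.-tuple R) R)
    (f : d.-tuple R -> R[i]) : R[i] :=
  Complex (Rintegral P (unitcube d) (fun x => complex.Re (f x)))
          (Rintegral P (unitcube d) (fun x => complex.Im (f x))).

Definition Sigma {R : realType} {d N : nat} (phi : d.-tuple R -> 'cV[R[i]]_N)
    (Q : probability (d.-tuple R) R) : 'M[R[i]]_N :=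
  \matrix_(k, l) cintegral Q (fun x => phi x k 0 * (phi x l 0)^*).

(* g(x) = phi(x)^* H phi(x)  (real since H is Hermitian; we take its real part) *)
Definition gquad {R : realType} {d N : nat} (phi : d.-tuple R -> 'cV[R[i]]_N)
    (H : 'M[R[i]]_N) (x : d.-tuple R) : R :=
  complex.Re ((map_mx (fun z => z^*) (phi x)^T *m H *m phi x) 0 0).

Definition Lg {R : realType} {d : nat} (g : d.-tuple R -> R)
    (Q : probability (d.-tuple R) R) : R :=
  ln (Rintegral Q (unitcube d) (fun x => expR (g x))).

Definition KL {R : realType} {d : nat} (P Q : probability (d.-tuple R) R) : \bar R :=
  if `[< P `<< Q >] then
    (\int[P]_(x in unitcube d) (ln (fine (('d (charge_of_finite_measure P) '/d Q) x)))%:E)%E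
  else +oo%E.

Definition DOPT {R : realType} {d N : nat} (phi : d.-tuple R -> 'cV[R[i]]_N)
    (S1 S2 : 'M[R[i]]_N) : \bar R :=
  ereal_inf [set e | exists P Q : probability (d.-tuple R) R,
    [/\ probX d P, Sigma phi P = S1, probX d Q, Sigma phi Q = S2 & KL P Q = e]].

Definition LOPT {R : realType} {d N : nat} (phi : d.-tuple R -> 'cV[R[i]]_N)
    (g : d.-tuple R -> R) (Q : probability (d.-tuple R) R) : \bar R :=
  ereal_sup [set ((Rintegral P (unitcube d) g)%:E - DOPT phi (Sigma phi P) (Sigma phi Q))%E
            | P in probX d].

(* Since g(x) = Re (phi(x)^* H phi(x)), the mean of g under P is Re tr(Sigma_P H):
   it depends on P only through Sigma_P.  The infimum defining D^OPT can
   therefore be pulled out of L^OPT_g(Q), which becomes the supremum of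
   E_P[g] - KL(P || Q~) over all P and all Q~ with Sigma_Q~ = Sigma_Q.  For a
   fixed Q~ the supremum over P is L_g(Q~) (Gibbs variational principle): the
   inequality is 1 + t <= e^t for t = g - L_g(Q~) - ln (dP/dQ~), integrated
   against P, and it is attained by the Gibbs measure dP = e^(g - L_g(Q~)) dQ~. *)

From HB Require Import structures.
From mathcomp Require Import all_boot all_order all_algebra.
From mathcomp Require Import all_classical all_reals all_analysis.
From mathcomp Require Import complex sesquilinear.
From mathcomp Require Import lra measurable_realfun.
Import Order.TTheory GRing.Theory Num.Theory.
Import numFieldNormedType.Exports.
Local Open Scope classical_set_scope.
Local Open Scope ring_scope.
Local Open Scope charge_scope.

Lemma leEFinB_swap (R : realType) (a : R) (x y : \bar R) :
  (a%:E - y <= x)%E -> (a%:E - x <= y)%E.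
Proof.
case: x => [x||]; case: y => [y||] //=; rewrite ?leey ?leNye //.
by rewrite -!EFinD !lee_fin; lra.
Qed.

Lemma expRBln_mulr_le (R : realType) (a r : R) : 0 <= r ->
  expR (a - ln r) * r <= expR a.
Proof.
rewrite le_eqVlt => /predU1P[<-|r_gt0]; first by rewrite mulr0 expR_ge0.
by rewrite expRB lnK ?posrE // mulfVK ?gt_eqF.
Qed.

Section integral_lemmas.
Context {d} {T : measurableType d} {R : realType}.
Implicit Types (D : set T).

Lemma EFin_Rintegral (mu : {measure set T -> \bar R}) D (f : T -> R) :
  measurable D -> mu.-integrable D (EFin \o f) ->
  (\int[mu]_(x in D) (f x)%:E)%E = (\int[mu]_(x in D) f x)%:E.
Proof. by move=> mD intf; rewrite fineK // integrable_fin_num. Qed.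

Lemma measurable_le_integral (mu : {measure set T -> \bar R}) D (f h : T -> \bar R) :
  measurable D -> measurable_fun D f -> measurable_fun D h ->
  (forall x, D x -> (f x <= h x)%E) ->
  (\int[mu]_(x in D) f x <= \int[mu]_(x in D) h x)%E.
Proof.
move=> mD mf mh fh; have fh' : {in D, forall x, (f x <= h x)%E}.
  by move=> x /set_mem; exact: fh.
rewrite (integralE _ _ f) (integralE _ _ h); apply: leeB.
- apply: ge0_le_integral => //; try exact: measurable_funepos.
  by move=> x /mem_set; exact: funepos_le fh' x.
- apply: ge0_le_integral => //; try exact: measurable_funeneg.
  by move=> x /mem_set; exact: funeneg_le fh' x.
Qed.

Lemma bounded_integrable {mu : {finite_measure set T -> \bar R}} {D}
    {f : T -> R} (M : R) :
  measurable D -> measurable_fun D f -> (forall x, D x -> `|f x| <= M) ->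
  mu.-integrable D (EFin \o f).
Proof.
move=> mD mf fM; apply: measurable_bounded_integrable => //.
  by rewrite ltey_eq fin_num_measure.
exists M; split; first exact: num_real.
by move=> y My x Dx; exact: le_trans (fM x Dx) (ltW My).
Qed.

Lemma Rintegral_sum (mu : {measure set T -> \bar R}) D (I : Type) (s : seq I)
    (F : I -> T -> R) :
  measurable D -> (forall i, mu.-integrable D (EFin \o F i)) ->
  \int[mu]_(x in D) (\sum_(i <- s) F i x) = \sum_(i <- s) \int[mu]_(x in D) F i x.
Proof.
move=> mD iF; elim: s => [|i s IHs].
  by under eq_Rintegral do rewrite big_nil; rewrite Rintegral_cst // mul0r big_nil.
under eq_Rintegral do rewrite big_cons.
rewrite RintegralD // ?IHs ?big_cons //.
apply: (eq_integrable mD (fun x => \sum_(j <- s) (F j x)%:E)).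
  by move=> x _; rewrite /= sumEFin.
by apply: integrable_sum => // j _; exact: iF.
Qed.

Lemma integrable_expR_bounded_above {mu : {finite_measure set T -> \bar R}} {D}
    {h : T -> R} (M : R) :
  measurable D -> measurable_fun D h -> (forall x, D x -> h x <= M) ->
  mu.-integrable D (EFin \o (fun x => expR (h x))).
Proof.
move=> mD mh hM; apply: (bounded_integrable (expR M)) => //.
  exact: measurableT_comp mh.
by move=> x Dx; rewrite ger0_norm ?expR_ge0 // ler_expR hM.
Qed.

End integral_lemmas.

Section density_probability.
Context {d} {T : measurableType d} {R : realType} (Q : probability T R) (w : T -> R).
Hypotheses (w_ge0 : forall x, 0 <= w x) (mw : measurable_fun setT w)
  (w_int1 : (\int[Q]_x (w x)%:E = 1)%E).

Definition density_measure (A : set T) : \bar R := (\int[Q]_(x in A) (w x)%:E)%E.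

Let density_measure0 : density_measure set0 = 0%E.
Proof. exact: integral_set0. Qed.

Let density_measure_ge0 A : (0 <= density_measure A)%E.
Proof. by apply: integral_ge0 => x _; rewrite lee_fin. Qed.

Let density_measure_sigma_additive : semi_sigma_additive density_measure.
Proof.
apply: semi_sigma_additive_nng_induced; first exact/measurable_EFinP.
by move=> x; rewrite lee_fin.
Qed.

HB.instance Definition _ := isMeasure.Build _ _ _ density_measure
  density_measure0 density_measure_ge0 density_measure_sigma_additive.

HB.instance Definition _ := Measure_isProbability.Build _ _ R density_measure w_int1.

Lemma density_measure_dominates : density_measure `<< Q.
Proof.
apply/null_content_dominatesP => A mA QA0.
by apply: null_set_integral => //; exact/measurable_EFinP/measurable_funTS.
Qed.

Lemma exists_density_probability : exists P : probability T R,
  (forall A, P A = \int[Q]_(x in A) (w x)%:E)%E /\ P `<< Q.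
Proof.
exists (density_measure : probability T R).
split=> //; exact: density_measure_dominates.
Qed.

End density_probability.

Lemma measurable_unitcube (R : realType) (d : nat) :
  measurable (unitcube d : set (d.-tuple R)).
Proof.
have -> : unitcube d = \bigcap_(i in [set: 'I_d]) ((@tnth d R)^~ i @^-1` `[0, 1]).
  apply/seteqP; split => x /= cube_x i; first by rewrite /= in_itv /= cube_x.
  by have := cube_x i I; rewrite /= in_itv.
apply: fin_bigcap_measurable => // i _; rewrite -[X in measurable X]setTI.
exact: measurable_tnth.
Qed.

Lemma KL_density {R : realType} {d : nat} {P Q : probability (d.-tuple R) R}
    {rho : d.-tuple R -> \bar R} :
  P `<< Q -> measurable_fun (unitcube d) rho ->
  ae_eq Q (unitcube d) rho ('d (charge_of_finite_measure P) '/d Q) ->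
  KL P Q = (\int[P]_(x in unitcube d) (ln (fine (rho x)))%:E)%E.
Proof.
move=> PQ mrho rhoE; rewrite /KL; case: asboolP => // _.
have mlnfine (f : d.-tuple R -> \bar R) : measurable_fun (unitcube d) f ->
    measurable_fun (unitcube d) (fun x => (ln (fine (f x)))%:E).
  move=> mf; apply/measurable_EFinP/measurableT_comp; first exact: measurable_ln.
  exact: measurableT_comp mf.
have mRN : measurable_fun setT ('d (charge_of_finite_measure P) '/d Q).
  exact: measurable_int (Radon_Nikodym_integrable (nu := charge_of_finite_measure P) PQ).
apply: ae_eq_integral; [exact: measurable_unitcube | exact: mlnfine (measurable_funTS mRN)
  | exact: mlnfine |].
apply: filterS (null_dominates_ae_eq (measurable_unitcube R d) PQ rhoE).
by move=> x + cube_x => ->.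
Qed.

Section gibbs_variational_principle.
Context {R : realType} {d : nat}.
Local Notation T := (d.-tuple R).
Local Notation U := (unitcube d : set T).
Context {g : T -> R} {M : R}.
Hypotheses (mg : measurable_fun U g) (g_bounded : forall x, U x -> `|g x| <= M).

Let mU : measurable U := measurable_unitcube R d.

Let integrable_g (mu : {finite_measure set T -> \bar R}) : mu.-integrable U (EFin \o g).
Proof. exact: bounded_integrable g_bounded. Qed.

Let measurable_gB c : measurable_fun U (fun x => g x - c).
Proof. exact: measurable_funB mg (measurable_cst c). Qed.

Let integrable_expR_gB (mu : {finite_measure set T -> \bar R}) c :
  mu.-integrable U (EFin \o (fun x => expR (g x - c))).
Proof.
apply: (integrable_expR_bounded_above (M - c)) => // x cube_x.
by rewrite lerD2r (le_trans (ler_norm _)) ?g_bounded.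
Qed.

Let integrable_expR_g (mu : {finite_measure set T -> \bar R}) :
  mu.-integrable U (EFin \o (fun x => expR (g x))).
Proof. by apply: eq_integrable (integrable_expR_gB mu 0) => // x _; rewrite /= subr0. Qed.

Lemma partition_function_gt0 {Q : probability T R} : Q U = 1%E ->
  0 < \int[Q]_(x in U) expR (g x).
Proof.
move=> QU; apply: lt_le_trans (expR_gt0 (- M)) _.
have -> : expR (- M) = \int[Q]_(x in U) expR (- M).
  by rewrite Rintegral_cst // (_ : fine (Q U) = 1) ?mulr1 // QU.
apply: le_Rintegral => //; [exact: finite_measure_integrable_cst
  | exact: integrable_expR_g |].
by move=> x cube_x; rewrite ler_expR lerNnormlW ?g_bounded.
Qed.

Lemma integral_gibbs_density {Q : probability T R} : Q U = 1%E ->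
  (\int[Q]_(x in U) (expR (g x - Lg g Q))%:E = 1)%E.
Proof.
move=> QU; have Z_gt0 := partition_function_gt0 QU.
rewrite EFin_Rintegral //; last exact: integrable_expR_gB.
rewrite (@eq_Rintegral _ _ _ Q U (fun x => expR (g x) * (expR (Lg g Q))^-1)); last first.
  by move=> x _; rewrite expRB.
by rewrite RintegralZr ?lnK ?posrE ?mulfV ?gt_eqF //; exact: integrable_expR_g.
Qed.

(* The everywhere nonnegative version rho of dP/dQ allows the change of variables
   dP = rho dQ for nonnegative integrands; then e^(g - c - ln rho) rho <= e^(g - c),
   whose Q-integral is 1. *)
Lemma integral_gibbs_ratio_le1 {P Q : probability T R} : P `<< Q -> Q U = 1%E ->
  (\int[P]_(x in U) (expR (g x - Lg g Q
     - ln (fine (Radon_Nikodym_SigmaFinite.f P Q x))))%:E <= 1)%E.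
Proof.
move=> PQ QU; set c := Lg g Q.
have mrho : measurable_fun setT (Radon_Nikodym_SigmaFinite.f P Q).
  exact: measurable_int (Radon_Nikodym_SigmaFinite.f_integrable PQ).
have rhoE x : Radon_Nikodym_SigmaFinite.f P Q x =
    (fine (Radon_Nikodym_SigmaFinite.f P Q x))%:E.
  by rewrite fineK ?Radon_Nikodym_SigmaFinite.f_fin_num.
have mk : measurable_fun U
    (fun x => (expR (g x - c - ln (fine (Radon_Nikodym_SigmaFinite.f P Q x))))%:E).
  apply/measurable_EFinP/measurableT_comp/measurable_funB => //.
  exact/measurableT_comp/measurable_funTS/measurableT_comp.
rewrite -(Radon_Nikodym_SigmaFinite.change_of_variables PQ _ mU mk); last first.
  by move=> x; rewrite lee_fin expR_ge0.
rewrite -(integral_gibbs_density QU); apply: ge0_le_integral => //.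
- by move=> x _; rewrite mule_ge0 ?lee_fin ?expR_ge0 ?Radon_Nikodym_SigmaFinite.f_ge0.
- by apply: emeasurable_funM => //; exact: measurable_funTS.
- exact: measurable_int (integrable_expR_gB Q c).
- move=> x _; rewrite (rhoE x : Radon_Nikodym_SigmaFinite.f P Q x = _) -EFinM lee_fin.
  by rewrite /= expRBln_mulr_le // fine_ge0 ?Radon_Nikodym_SigmaFinite.f_ge0.
Qed.

Lemma gibbs_inequality {P Q : probability T R} : P U = 1%E -> Q U = 1%E ->
  ((\int[P]_(x in U) g x)%:E - KL P Q <= (Lg g Q)%:E)%E.
Proof.
move=> PU QU; have [PQ|nPQ] := pselect (P `<< Q); last first.
  by rewrite /KL asboolF //= leNye.
have mrho : measurable_fun setT (Radon_Nikodym_SigmaFinite.f P Q).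
  exact: measurable_int (Radon_Nikodym_SigmaFinite.f_integrable PQ).
rewrite (KL_density PQ (measurable_funTS mrho) (ae_eq_Radon_Nikodym_SigmaFinite PQ mU)).
set c := Lg g Q; pose r x := fine (Radon_Nikodym_SigmaFinite.f P Q x).
pose k x := expR (g x - c - ln (r x)).
have kP_le1 : (\int[P]_(x in U) (k x)%:E <= 1)%E := integral_gibbs_ratio_le1 PQ QU.
have mlnr : measurable_fun U (fun x => ln (r x)).
  exact/measurableT_comp/measurable_funTS/measurableT_comp.
have mk : measurable_fun U k by apply/measurableT_comp/measurable_funB.
have intk : P.-integrable U (EFin \o k).
  apply/integrableP; split; first exact/measurable_EFinP.
  under eq_integral => x _ do rewrite /= ger0_norm ?expR_ge0 //.
  exact: le_lt_trans kP_le1 (ltry _).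
have intg := integrable_g P.
have intc := finite_measure_integrable_cst P (1 - c) mU.
have intgc : P.-integrable U (EFin \o (fun x => g x + (1 - c))).
  by apply: eq_integrable (integrableD mU intg intc).
have intgck : P.-integrable U (EFin \o (fun x => g x + (1 - c) - k x)).
  by apply: eq_integrable (integrableB mU intgc intk).
have le_KL : ((\int[P]_(x in U) (g x + (1 - c) - k x))%:E
    <= \int[P]_(x in U) (ln (r x))%:E)%E.
  rewrite -EFin_Rintegral //; apply: measurable_le_integral => //.
  - by apply/measurable_EFinP/measurable_funB => //; exact: measurable_funD.
  - exact/measurable_EFinP.
  - move=> x _; rewrite lee_fin.
    by have := expR_ge1Dx (g x - c - ln (r x)); rewrite -/(k x); lra.
rewrite RintegralB // RintegralD // ?Rintegral_cst // in le_KL.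
rewrite (_ : fine (P U) = 1) ?mulr1 in le_KL; last by rewrite PU.
have kP_le1' : \int[P]_(x in U) k x <= 1 by rewrite -lee_fin -EFin_Rintegral.
apply: le_trans (leeB (lexx _) le_KL) _; rewrite -EFinB lee_fin; lra.
Qed.

Lemma gibbs_measure_exists {Q : probability T R} : Q U = 1%E ->
  exists P : probability T R, [/\ P U = 1%E, P `<< Q &
    ae_eq Q U (fun x => (expR (g x - Lg g Q))%:E)
      ('d (charge_of_finite_measure P) '/d Q)].
Proof.
move=> QU; set c := Lg g Q; set w := (fun x => expR (g x - c)) \_ U.
have w_ge0 x : 0 <= w x by rewrite /w /patch; case: ifP => _ //; rewrite expR_ge0.
have mw : measurable_fun setT w.
  by apply/(measurable_restrictT _ mU)/measurableT_comp.
have w_int1 : (\int[Q]_x (w x)%:E = 1)%E.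
  have -> : (fun x => (w x)%:E) = (EFin \o (fun x => expR (g x - c))) \_ U.
    by rewrite restrict_EFin.
  by rewrite -integral_mkcond integral_gibbs_density.
have [P [PE PQ]] := exists_density_probability Q w w_ge0 mw w_int1.
have PE_U E : E `<=` U -> P E = (\int[Q]_(x in E) (expR (g x - c))%:E)%E.
  move=> EU; rewrite PE; apply: eq_integral => x /set_mem Ex.
  by rewrite /w patchE mem_set //; exact: EU.
exists P; split => //; first by rewrite PE_U // integral_gibbs_density.
have PQ' : charge_of_finite_measure P `<< Q := PQ.
apply: integral_ae_eq => //.
- exact: integrable_expR_gB.
- exact: measurable_funTS (measurable_int _ (Radon_Nikodym_integrable PQ')).
- by move=> E EU mE; rewrite -(Radon_Nikodym_integral PQ' mE); exact/esym/PE_U.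
Qed.

Lemma gibbs_measure_attains {Q : probability T R} : Q U = 1%E ->
  exists P : probability T R, P U = 1%E /\
    ((\int[P]_(x in U) g x)%:E - KL P Q = (Lg g Q)%:E)%E.
Proof.
move=> QU; have [P [PU PQ gibbsE]] := gibbs_measure_exists QU.
exists P; split => //.
rewrite (KL_density PQ _ gibbsE); last exact/measurable_EFinP/measurableT_comp.
under eq_integral do rewrite /= expRK.
have intg := integrable_g P; have intc := finite_measure_integrable_cst P (Lg g Q) mU.
have intgc : P.-integrable U (EFin \o (fun x => g x - Lg g Q)).
  by apply: eq_integrable (integrableB mU intg intc).
rewrite EFin_Rintegral // RintegralB // Rintegral_cst //.
rewrite (_ : fine (P U) = 1) ?mulr1 ?PU // -EFinB.
by congr EFin; lra.
Qed.

End gibbs_variational_principle.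

Lemma complex_Re_sum (R : realType) (I : Type) (s : seq I) (F : I -> R[i]) :
  complex.Re (\sum_(i <- s) F i) = \sum_(i <- s) complex.Re (F i).
Proof. exact: (raddf_sum (@complex.Re R : Rcomplex R -> R)). Qed.

Lemma complex_ReD (R : realType) (a b : R[i]) :
  complex.Re (a + b) = complex.Re a + complex.Re b.
Proof. by case: a b => [a1 a2] [b1 b2]. Qed.

Lemma complex_ImD (R : realType) (a b : R[i]) :
  complex.Im (a + b) = complex.Im a + complex.Im b.
Proof. by case: a b => [a1 a2] [b1 b2]. Qed.

Lemma complex_ReM (R : realType) (a b : R[i]) :
  complex.Re (a * b) = complex.Re a * complex.Re b - complex.Im a * complex.Im b.
Proof. by case: a b => [a1 a2] [b1 b2]. Qed.

Lemma complex_ImM (R : realType) (a b : R[i]) :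
  complex.Im (a * b) = complex.Re a * complex.Im b + complex.Im a * complex.Re b.
Proof. by case: a b => [a1 a2] [b1 b2]. Qed.

Definition bounded_measurable_cfun {d} {T : measurableType d} {R : realType}
    (D : set T) (f : T -> R[i]) :=
  [/\ measurable_fun D (fun x => complex.Re (f x)),
      measurable_fun D (fun x => complex.Im (f x))
    & exists M, forall x, D x -> `|complex.Re (f x)| <= M /\ `|complex.Im (f x)| <= M].

Section bounded_measurable_cfun.
Context {d} {T : measurableType d} {R : realType} {D : set T}.
Implicit Types (f h : T -> R[i]).

Lemma bmcf_cst (c : R[i]) : bounded_measurable_cfun D (fun=> c).
Proof.
split; [exact: measurable_cst.. |].
by exists (`|complex.Re c| + `|complex.Im c|) => x _; rewrite lerDl lerDr !normr_ge0.
Qed.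

Lemma bmcf_conj {f} : bounded_measurable_cfun D f ->
  bounded_measurable_cfun D (fun x => (f x)^*).
Proof.
have ReJ (z : R[i]) : complex.Re z^* = complex.Re z by case: z.
have ImJ (z : R[i]) : complex.Im z^* = - complex.Im z by case: z.
case=> mRe mIm [M fM]; split.
- by under eq_fun do rewrite ReJ.
- by under eq_fun do rewrite ImJ; exact: measurable_funN.
- by exists M => x Dx; rewrite ReJ ImJ normrN; exact: fM.
Qed.

Lemma bmcf_add {f h} : bounded_measurable_cfun D f -> bounded_measurable_cfun D h ->
  bounded_measurable_cfun D (fun x => f x + h x).
Proof.
case=> mRef mImf [Mf fM] [mReh mImh [Mh hM]].
split.
- by under eq_fun do rewrite complex_ReD; exact: measurable_funD.
- by under eq_fun do rewrite complex_ImD; exact: measurable_funD.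
exists (Mf + Mh) => x Dx; rewrite complex_ReD complex_ImD.
have [fRe fIm] := fM x Dx; have [hRe hIm] := hM x Dx.
by split; apply: le_trans (ler_normD _ _) (lerD _ _).
Qed.

Lemma bmcf_mul {f h} : bounded_measurable_cfun D f -> bounded_measurable_cfun D h ->
  bounded_measurable_cfun D (fun x => f x * h x).
Proof.
case=> mRef mImf [Mf fM] [mReh mImh [Mh hM]].
split; first by under eq_fun do rewrite complex_ReM; apply: measurable_funB;
  exact: measurable_funM.
  by under eq_fun do rewrite complex_ImM; apply: measurable_funD;
    exact: measurable_funM.
exists (Mf * Mh + Mf * Mh) => x Dx; rewrite complex_ReM complex_ImM.
have [fRe fIm] := fM x Dx; have [hRe hIm] := hM x Dx.
split; [apply: le_trans (ler_normB _ _) _ | apply: le_trans (ler_normD _ _) _];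
  by rewrite !normrM; apply: lerD; apply: ler_pM.
Qed.

Lemma bmcf_sum (I : Type) (s : seq I) (F : I -> T -> R[i]) :
  (forall i, bounded_measurable_cfun D (F i)) ->
  bounded_measurable_cfun D (fun x => \sum_(i <- s) F i x).
Proof.
move=> bmF; elim: s => [|i s IHs].
  by under eq_fun do rewrite big_nil; exact: bmcf_cst.
by under eq_fun do rewrite big_cons; exact: bmcf_add.
Qed.

Lemma integrable_bmcf (mu : {finite_measure set T -> \bar R}) {f} :
  measurable D -> bounded_measurable_cfun D f ->
  mu.-integrable D (EFin \o (fun x => complex.Re (f x))) /\
  mu.-integrable D (EFin \o (fun x => complex.Im (f x))).
Proof.
move=> mD [mRe mIm [M fM]].
by split; apply: (bounded_integrable M) => // x /fM[].
Qed.

End bounded_measurable_cfun.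

Lemma Rintegral_ReM {R : realType} {d : nat} (P : probability (d.-tuple R) R)
    (c : R[i]) (f : d.-tuple R -> R[i]) :
  bounded_measurable_cfun (unitcube d) f ->
  \int[P]_(x in unitcube d) complex.Re (c * f x) = complex.Re (c * cintegral P f).
Proof.
have mU := measurable_unitcube R d.
move=> bmf; have [iRe iIm] := integrable_bmcf P mU bmf.
rewrite complex_ReM /=; under eq_Rintegral do rewrite complex_ReM.
rewrite RintegralB ?RintegralZl //.
- exact: eq_integrable (integrableZl mU (complex.Re c) iRe).
- exact: eq_integrable (integrableZl mU (complex.Im c) iIm).
Qed.

Section feature_quadratic_form.
Context {R : realType} {d N : nat} (phi : d.-tuple R -> 'cV[R[i]]_N)
  (H : 'M[R[i]]_N).
Local Notation U := (unitcube d : set (d.-tuple R)).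
Hypothesis phi_ok : feature_ok phi.

Lemma gquadE x : gquad phi H x =
  complex.Re (\sum_(l < N) \sum_(k < N) H k l * (phi x l 0 * (phi x k 0)^*)).
Proof.
rewrite /gquad mxE; congr complex.Re; apply: eq_bigr => l _.
rewrite mxE big_distrl /=; apply: eq_bigr => k _.
by rewrite !mxE -mulrA mulrCA [(phi x k 0)^* * _]mulrC.
Qed.

Let bmcf_Sigma_entry l k :
  bounded_measurable_cfun U (fun x => phi x l 0 * (phi x k 0)^*).
Proof.
have [mRe [mIm [M phiM]]] := phi_ok.
have bmcf_phi j : bounded_measurable_cfun U (fun x => phi x j 0).
  by split => //; exists M => x /phiM.
by apply: bmcf_mul; [|apply: bmcf_conj].
Qed.

Let bmcf_Sigma_term l k :
  bounded_measurable_cfun U (fun x => H k l * (phi x l 0 * (phi x k 0)^*)).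
Proof. exact: bmcf_mul (bmcf_cst _) (bmcf_Sigma_entry l k). Qed.

Let bmcf_Sigma_row l :
  bounded_measurable_cfun U (fun x => \sum_(k < N) H k l * (phi x l 0 * (phi x k 0)^*)).
Proof. by apply: bmcf_sum => k; exact: bmcf_Sigma_term. Qed.

Let bmcf_gquad : bounded_measurable_cfun U
  (fun x => \sum_(l < N) \sum_(k < N) H k l * (phi x l 0 * (phi x k 0)^*)).
Proof. by apply: bmcf_sum => l; exact: bmcf_Sigma_row. Qed.

Lemma measurable_gquad : measurable_fun U (gquad phi H).
Proof.
have [mRe _ _] := bmcf_gquad.
by apply: eq_measurable_fun mRe => x _; rewrite gquadE.
Qed.

Lemma gquad_bounded : exists M, forall x, U x -> `|gquad phi H x| <= M.
Proof.
have [_ _ [M gM]] := bmcf_gquad.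
by exists M => x /gM[]; rewrite gquadE.
Qed.

Lemma integral_gquad (P : probability (d.-tuple R) R) :
  \int[P]_(x in U) gquad phi H x = complex.Re (\tr (Sigma phi P *m H)).
Proof.
have mU := measurable_unitcube R d.
under eq_Rintegral do rewrite gquadE complex_Re_sum.
rewrite Rintegral_sum // => [|l]; last first.
  exact: (integrable_bmcf P mU (bmcf_Sigma_row l)).1.
rewrite /mxtrace complex_Re_sum; apply: eq_bigr => l _.
under eq_Rintegral do rewrite complex_Re_sum.
rewrite Rintegral_sum // => [|k]; last first.
  exact: (integrable_bmcf P mU (bmcf_Sigma_term l k)).1.
rewrite mxE complex_Re_sum; apply: eq_bigr => k _.
by rewrite Rintegral_ReM // mxE mulrC.
Qed.

End feature_quadratic_form.

Theorem lemma22 (R : realType) (d N : nat)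
    (phi : d.-tuple R -> 'cV[R[i]]_N) (H : 'M[R[i]]_N) :
  feature_ok phi ->
  H \is hermsymmx ->
  forall Q : probability (d.-tuple R) R, probX d Q ->
  LOPT phi (gquad phi H) Q =
  ereal_sup [set (Lg (gquad phi H) Qt)%:E
            | Qt in [set Qt | probX d Qt /\ Sigma phi Qt = Sigma phi Q]].
Proof.
(* [H] need not be Hermitian: [gquad] takes the real part. *)
move=> phi_ok _ Q QX.
have mg := measurable_gquad phi H phi_ok.
have [M g_bounded] := gquad_bounded phi H phi_ok.
have integral_gquad_Sigma (P P' : probability (d.-tuple R) R) :
    Sigma phi P = Sigma phi P' ->
    \int[P]_(x in unitcube d) gquad phi H x = \int[P']_(x in unitcube d) gquad phi H x.
  by move=> SPP'; rewrite !(integral_gquad phi H phi_ok) SPP'.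
apply/eqP; rewrite eq_le; apply/andP; split.
- apply/ereal_supP => _ [P PX <-].
  apply: leEFinB_swap; apply/ereal_infP => _ [P' [Q' [P'X SP' Q'X SQ' <-]]].
  apply: leEFinB_swap; rewrite (integral_gquad_Sigma P P' (esym SP')).
  apply: le_trans (gibbs_inequality mg g_bounded P'X Q'X) _.
  by apply: ereal_sup_ubound; exists Q'.
- apply/ereal_supP => _ [Qt [QtX SQt] <-].
  have [P [PX <-]] := gibbs_measure_attains mg g_bounded QtX.
  apply: le_ereal_sup_tmp; exists ((\int[P]_(x in unitcube d) gquad phi H x)%:E -
    DOPT phi (Sigma phi P) (Sigma phi Q))%E; first by exists P.
  apply: leeB => //; apply: ereal_inf_lbound.
  by exists P, Qt.
Qed.
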